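(* Let $\mathbb{F}$ be an algebraically closed field with $\mathrm{char}\,\mathbb{F}=2$, and let $\mathcal{A}$ be a (not necessarily unital) subalgebra of $\mathbf{O}$ with $\mathcal{A}\subseteq\mathbf{O}_0$ and $\dim\mathcal{A}\ge3$. Then there exists $g\in{\rm G}_2$ such that either (a) $\{1_{\mathbf{O}},\mathbf{u}_1,\mathbf{v}_2\}\subseteq g\mathcal{A}$; or (b) $\{\mathbf{u}_1,\mathbf{v}_2,\mathbf{v}_3\}\subseteq g\mathcal{A}$ and $1_{\mathbf{O}}\notin g\mathcal{A}$.
   Context: The split octonion algebra $\mathbf{O}$ is the 8-dimensional $\mathbb{F}$-vector space of formal matrices $a=\begin{pmatrix}\alpha&\mathbf{u}\\ \mathbf{v}&\beta\end{pmatrix}$ with $\alpha,\beta\in\mathbb{F}$, $\mathbf{u},\mathbf{v}\in\mathbb{F}^3$, with multiplication $\begin{pmatrix}\alpha&\mathbf{u}\\ \mathbf{v}&\beta\end{pmatrix}\begin{pmatrix}\alpha'&\mathbf{u}'\\ \mathbf{v}'&\beta'\end{pmatrix}=\begin{pmatrix}\alpha\alpha'+\mathbf{u}\cdot\mathbf{v}'&\alpha\mathbf{u}'+\beta'\mathbf{u}-\mathbf{v}\times\mathbf{v}'\\ \alpha'\mathbf{v}+\beta\mathbf{v}'+\mathbf{u}\times\mathbf{u}'&\beta\beta'+\mathbf{v}\cdot\mathbf{u}'\end{pmatrix}$ (dot product and cross product on $\mathbb{F}^3$). Trace $\mathrm{tr}(a)=\alpha+\beta$, $\mathbf{O}_0=\{a\in\mathbf{O}\mid\mathrm{tr}(a)=0\}$.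 With $\mathbf{c}_1,\mathbf{c}_2,\mathbf{c}_3$ the standard basis of $\mathbb{F}^3$: $\mathbf{u}_i$ has $\mathbf{u}=\mathbf{c}_i$ and all else $0$, $\mathbf{v}_i$ has $\mathbf{v}=\mathbf{c}_i$ and all else $0$, and $1_{\mathbf{O}}$ has $\alpha=\beta=1$, $\mathbf{u}=\mathbf{v}=0$. ${\rm G}_2=\mathrm{Aut}(\mathbf{O})$. *)

From HB Require Import structures.
From mathcomp Require Import all_boot all_order all_algebra.
Set Implicit Arguments. Unset Strict Implicit. Unset Printing Implicit Defensive.
Import Order.TTheory GRing.Theory.
Local Open Scope ring_scope.

(* The split octonions O over a field F, realised as the 8-dimensional
   F-vector space 'rV[F]_8 of formal matrices  ( alpha  u ; v  beta ),
   with coordinates: index 0 = alpha, 1..3 = u, 4..6 = v, 7 = beta. *)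
Section Octonions.
Variable F : fieldType.

Definition Oct := 'rV[F]_8.

Definition oalpha (a : Oct) : F := a 0 (inord 0).
Definition obeta (a : Oct) : F := a 0 (inord 7).
Definition ou (a : Oct) : 'rV[F]_3 := \row_(i < 3) a 0 (inord (i + 1)).
Definition ov (a : Oct) : 'rV[F]_3 := \row_(i < 3) a 0 (inord (i + 4)).

Definition mkO (al : F) (u v : 'rV[F]_3) (be : F) : Oct :=
  \row_(j < 8)
    if (j == 0 :> nat) then al
    else if (j < 4)%N then u 0 (inord (j - 1))
    else if (j < 7)%N then v 0 (inord (j - 4))
    else be.

Definition dot3 (x y : 'rV[F]_3) : F := \sum_(i < 3) x 0 i * y 0 i.
Definition cross3 (x y : 'rV[F]_3) : 'rV[F]_3 :=
  \row_(i < 3)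
    (x 0 (inord ((i + 1) %% 3)) * y 0 (inord ((i + 2) %% 3))
     - x 0 (inord ((i + 2) %% 3)) * y 0 (inord ((i + 1) %% 3))).

Definition omul (a b : Oct) : Oct :=
  mkO (oalpha a * oalpha b + dot3 (ou a) (ov b))
      (oalpha a *: ou b + obeta b *: ou a - cross3 (ov a) (ov b))
      (oalpha b *: ov a + obeta a *: ov b + cross3 (ou a) (ou b))
      (obeta a * obeta b + dot3 (ov a) (ou b)).

Definition otr (a : Oct) : F := oalpha a + obeta a.

Definition cvec (i : 'I_3) : 'rV[F]_3 := \row_(j < 3) (j == i)%:R.

Definition oone : Oct := mkO 1 0 0 1.
Definition ouvec (i : 'I_3) : Oct := mkO 0 (cvec i) 0 0.
Definition ovvec (i : 'I_3) : Oct := mkO 0 0 (cvec i) 0.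

Definition is_subalgebra (A : {vspace Oct}) : Prop :=
  forall x y, x \in A -> y \in A -> omul x y \in A.

Definition isG2 (g : Oct -> Oct) : Prop :=
  [/\ forall (c : F) (x y : Oct), g (c *: x + y) = c *: g x + g y,
      bijective g &
      forall x y, g (omul x y) = omul (g x) (g y)].

Definition in_image (g : Oct -> Oct) (A : {vspace Oct}) (x : Oct) : Prop :=
  exists2 a, a \in A & x = g a.

End Octonions.

From HB Require Import structures.
From mathcomp Require Import all_boot all_order all_algebra.
From mathcomp Require Import ring.
Set Implicit Arguments. Unset Strict Implicit. Unset Printing Implicit Defensive.
Import Order.TTheory GRing.Theory.
Local Open Scope ring_scope.

(* In characteristic 2, subtracting l 1 from an element q of A outside F 1,
   where l^2 = -n(q), leaves a nonzero p with p^2 = 0: traceless octonions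
   satisfy q^2 = -n(q) 1, so l 1 lies in A whenever l != 0, and
   n(q - l 1) = n(q) + l^2 while tr(l 1) = 2 l = 0.  G2 is transitive on the
   lines of such elements, so we may assume u1 in A.  The conditions
   tr(u1 q) = 0 then produce a nonzero element of F v2 + F v3 in A, which an
   automorphism fixing u1 moves to F v2.  If moreover 1 is not in A, a third
   element reduces modulo u1, v2 to some r in A with r^2 = -n(r) 1, hence
   n(r) = 0, and an automorphism preserving F u1 + F v2 moves r to F v3. *)

Section Coordinates.
Variable F : fieldType.
Local Notation Oct := (Oct F).

Definition cf (p : Oct) (k : nat) : F := p 0 (inord k).

Definition mk8 (a0 a1 a2 a3 a4 a5 a6 a7 : F) : Oct :=
  \row_(j < 8) nth 0 [:: a0; a1; a2; a3; a4; a5; a6; a7] j.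

Lemma cf_mk8 a0 a1 a2 a3 a4 a5 a6 a7 k : (k < 8)%N ->
  cf (mk8 a0 a1 a2 a3 a4 a5 a6 a7) k = nth 0 [:: a0; a1; a2; a3; a4; a5; a6; a7] k.
Proof. by move=> lt_k8; rewrite /cf /mk8 mxE inordK. Qed.

Lemma mk8_cf (p : Oct) :
  p = mk8 (cf p 0) (cf p 1) (cf p 2) (cf p 3) (cf p 4) (cf p 5) (cf p 6) (cf p 7).
Proof.
apply/rowP => -[m lt_m8]; rewrite /mk8 /cf mxE /=.
do 8 (case: m lt_m8 => [|m] lt_m8; first by congr (p _ _); apply: val_inj; rewrite /= inordK).
by [].
Qed.

Lemma mk8_eq a0 a1 a2 a3 a4 a5 a6 a7 b0 b1 b2 b3 b4 b5 b6 b7 :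
  a0 = b0 -> a1 = b1 -> a2 = b2 -> a3 = b3 -> a4 = b4 -> a5 = b5 -> a6 = b6 -> a7 = b7 ->
  mk8 a0 a1 a2 a3 a4 a5 a6 a7 = mk8 b0 b1 b2 b3 b4 b5 b6 b7.
Proof. by move=> -> -> -> -> -> -> -> ->. Qed.

Lemma cf0 k : cf (0 : Oct) k = 0.
Proof. by rewrite /cf mxE. Qed.

Lemma cfD (x y : Oct) k : cf (x + y) k = cf x k + cf y k.
Proof. by rewrite /cf mxE. Qed.

Lemma cfZ c (x : Oct) k : cf (c *: x) k = c * cf x k.
Proof. by rewrite /cf mxE. Qed.

Lemma mk8Z c a0 a1 a2 a3 a4 a5 a6 a7 :
  c *: mk8 a0 a1 a2 a3 a4 a5 a6 a7 =
  mk8 (c * a0) (c * a1) (c * a2) (c * a3) (c * a4) (c * a5) (c * a6) (c * a7).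
Proof. by rewrite [LHS]mk8_cf !cfZ !cf_mk8. Qed.

Lemma mk8_lin c a0 a1 a2 a3 a4 a5 a6 a7 b0 b1 b2 b3 b4 b5 b6 b7 :
  c *: mk8 a0 a1 a2 a3 a4 a5 a6 a7 + mk8 b0 b1 b2 b3 b4 b5 b6 b7 =
  mk8 (c * a0 + b0) (c * a1 + b1) (c * a2 + b2) (c * a3 + b3)
      (c * a4 + b4) (c * a5 + b5) (c * a6 + b6) (c * a7 + b7).
Proof. by rewrite [LHS]mk8_cf !cfD !cfZ !cf_mk8. Qed.

Lemma omulE (a b : Oct) : omul a b =
  mk8 (cf a 0 * cf b 0 + (cf a 1 * cf b 4 + cf a 2 * cf b 5 + cf a 3 * cf b 6))
      (cf a 0 * cf b 1 + cf b 7 * cf a 1 - (cf a 5 * cf b 6 - cf a 6 * cf b 5))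
      (cf a 0 * cf b 2 + cf b 7 * cf a 2 - (cf a 6 * cf b 4 - cf a 4 * cf b 6))
      (cf a 0 * cf b 3 + cf b 7 * cf a 3 - (cf a 4 * cf b 5 - cf a 5 * cf b 4))
      (cf b 0 * cf a 4 + cf a 7 * cf b 4 + (cf a 2 * cf b 3 - cf a 3 * cf b 2))
      (cf b 0 * cf a 5 + cf a 7 * cf b 5 + (cf a 3 * cf b 1 - cf a 1 * cf b 3))
      (cf b 0 * cf a 6 + cf a 7 * cf b 6 + (cf a 1 * cf b 2 - cf a 2 * cf b 1))
      (cf a 7 * cf b 7 + (cf a 4 * cf b 1 + cf a 5 * cf b 2 + cf a 6 * cf b 3)).
Proof.
rewrite /omul /mkO /mk8 /oalpha /obeta /dot3 /cf; apply/rowP => -[m lt_m8].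
rewrite !mxE; case: m lt_m8 => [|[|[|[|[|[|[|[|m]]]]]]]] lt_m8 //=.
all: rewrite ?mxE ?big_ord_recr ?big_ord0 /= ?mxE.
all: rewrite ?inordK //=; rewrite ?inordK //=; rewrite ?inordK //=.
all: by rewrite add0r.
Qed.

Lemma otrE (p : Oct) : otr p = cf p 0 + cf p 7.
Proof. by []. Qed.

Lemma otr0_cf7 (p : Oct) : otr p = 0 -> cf p 7 = - cf p 0.
Proof. by move=> /eqP; rewrite otrE addrC addr_eq0 => /eqP. Qed.

Lemma ooneE : oone F = mk8 1 0 0 0 0 0 0 1.
Proof. by rewrite [LHS]mk8_cf /oone /mkO /cf; apply: mk8_eq; rewrite !mxE !inordK. Qed.

Lemma ouvec0E : ouvec F 0 = mk8 0 1 0 0 0 0 0 0.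
Proof.
rewrite [LHS]mk8_cf /ouvec /mkO /cf /cvec; apply: mk8_eq; rewrite !mxE !inordK //= ?mxE //.
all: by rewrite -val_eqE /= inordK.
Qed.

Lemma ovvec1E : ovvec F 1 = mk8 0 0 0 0 0 1 0 0.
Proof.
rewrite [LHS]mk8_cf /ovvec /mkO /cf /cvec; apply: mk8_eq; rewrite !mxE !inordK //= ?mxE //.
all: by rewrite -val_eqE /= inordK.
Qed.

Lemma ovvec2E : ovvec F 2 = mk8 0 0 0 0 0 0 1 0.
Proof.
rewrite [LHS]mk8_cf /ovvec /mkO /cf /cvec; apply: mk8_eq; rewrite !mxE !inordK //= ?mxE //.
all: by rewrite -val_eqE /= inordK.
Qed.

Lemma otr_mul_u1 (q : Oct) : otr (omul (ouvec F 0) q) = cf q 4.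
Proof. by rewrite otrE omulE ouvec0E !cf_mk8 //=; ring. Qed.

Lemma otr_mul_v2 (q : Oct) : otr (omul (ovvec F 1) q) = cf q 2.
Proof. by rewrite otrE omulE ovvec1E !cf_mk8 //=; ring. Qed.

Definition onorm (p : Oct) : F :=
  cf p 0 * cf p 7 - (cf p 1 * cf p 4 + cf p 2 * cf p 5 + cf p 3 * cf p 6).

Lemma omul_sq (p : Oct) : omul p p = otr p *: p - onorm p *: oone F.
Proof.
rewrite -scaleNr [RHS]mk8_cf !cfD !cfZ ooneE !cf_mk8 //= omulE otrE /onorm.
by apply: mk8_eq; ring.
Qed.

Definition onull (p : Oct) : Prop := omul p p = 0 /\ otr p = 0.

Lemma onullP (p : Oct) : onull p <-> otr p = 0 /\ onorm p = 0.
Proof.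
split=> [[sq0 tr0]|[tr0 n0]]; last by split; rewrite // omul_sq tr0 n0 !scale0r subr0.
split=> //; move: sq0; rewrite omul_sq tr0 scale0r sub0r => /eqP; rewrite oppr_eq0 => /eqP.
by move/(congr1 (cf^~ 0%N)); rewrite cfZ cf0 ooneE cf_mk8 //= mulr1.
Qed.

End Coordinates.

Section Automorphisms.
Variable F : fieldType.
Local Notation Oct := (Oct F).

(* Every automorphism fixes 1 and preserves the trace; for the explicit
   automorphisms below this is checked directly rather than derived. *)
Definition isG2t (g : Oct -> Oct) : Prop :=
  [/\ isG2 g, forall x, otr (g x) = otr x & g (oone F) = oone F].

Lemma isG2t_intro (g h : Oct -> Oct) :
  (forall c x y, g (c *: x + y) = c *: g x + g y) -> cancel g h -> cancel h g ->
  (forall x y, g (omul x y) = omul (g x) (g y)) ->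
  (forall x, otr (g x) = otr x) -> g (oone F) = oone F -> isG2t g.
Proof. by move=> g_lin gK hK gM g_tr g1; split=> //; split=> //; exists h. Qed.

Lemma isG2t_comp (g h : Oct -> Oct) : isG2t g -> isG2t h -> isG2t (g \o h).
Proof.
move=> [[g_lin [g' gK g'K] gM] g_tr g1] [[h_lin [h' hK h'K] hM] h_tr h1].
apply: (@isG2t_intro _ (h' \o g')) => [c x y|x|x|x y|x|] /=.
- by rewrite h_lin g_lin.
- by rewrite gK hK.
- by rewrite h'K g'K.
- by rewrite hM gM.
- by rewrite g_tr h_tr.
- by rewrite h1 g1.
Qed.

Lemma isG2t_lin (g : Oct -> Oct) c x y : isG2t g -> g (c *: x + y) = c *: g x + g y.
Proof. by case=> [[]]. Qed.

Lemma isG2t0 (g : Oct -> Oct) : isG2t g -> g 0 = 0.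
Proof.
move=> G2g; have := isG2t_lin 1 0 0 G2g; rewrite !scale1r addr0 => g00.
by apply: (addrI (g 0)); rewrite addr0 -g00.
Qed.

Lemma isG2tZ (g : Oct -> Oct) c x : isG2t g -> g (c *: x) = c *: g x.
Proof. by move=> G2g; rewrite -[c *: x]addr0 isG2t_lin // isG2t0 // addr0. Qed.

Ltac isG2t_by_coords g ginv :=
  apply: (@isG2t_intro g ginv);
  [ move=> c x y; rewrite /g !cfD !cfZ mk8_lin; apply: mk8_eq; ring
  | move=> x; rewrite /g /ginv !cf_mk8 //= [RHS]mk8_cf; apply: mk8_eq; ring
  | move=> x; rewrite /g /ginv !cf_mk8 //= [RHS]mk8_cf; apply: mk8_eq; ring
  | move=> x y; rewrite /g !omulE !cf_mk8 //=; apply: mk8_eq; ring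
  | move=> x; rewrite /g !otrE !cf_mk8 //=; ring
  | rewrite /g ooneE !cf_mk8 //=; apply: mk8_eq; ring ].

Definition swapuv (p : Oct) :=
  mk8 (cf p 7) (- cf p 4) (- cf p 5) (- cf p 6) (- cf p 1) (- cf p 2) (- cf p 3) (cf p 0).

Lemma isG2t_swapuv : isG2t swapuv.
Proof. isG2t_by_coords swapuv swapuv. Qed.

Definition rot12 (p : Oct) :=
  mk8 (cf p 0) (cf p 2) (- cf p 1) (cf p 3) (cf p 5) (- cf p 4) (cf p 6) (cf p 7).
Definition rot12V (p : Oct) :=
  mk8 (cf p 0) (- cf p 2) (cf p 1) (cf p 3) (- cf p 5) (cf p 4) (cf p 6) (cf p 7).
Definition rot13 (p : Oct) :=
  mk8 (cf p 0) (cf p 3) (cf p 2) (- cf p 1) (cf p 6) (cf p 5) (- cf p 4) (cf p 7).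
Definition rot13V (p : Oct) :=
  mk8 (cf p 0) (- cf p 3) (cf p 2) (cf p 1) (- cf p 6) (cf p 5) (cf p 4) (cf p 7).
Definition rot23 (p : Oct) :=
  mk8 (cf p 0) (cf p 1) (cf p 3) (- cf p 2) (cf p 4) (cf p 6) (- cf p 5) (cf p 7).
Definition rot23V (p : Oct) :=
  mk8 (cf p 0) (cf p 1) (- cf p 3) (cf p 2) (cf p 4) (- cf p 6) (cf p 5) (cf p 7).

Lemma isG2t_rot12 : isG2t rot12.
Proof. isG2t_by_coords rot12 rot12V. Qed.

Lemma isG2t_rot13 : isG2t rot13.
Proof. isG2t_by_coords rot13 rot13V. Qed.

Lemma isG2t_rot23 : isG2t rot23.
Proof. isG2t_by_coords rot23 rot23V. Qed.

(* A Weyl group element: u1 -> v2 -> -u1 and u3 -> -v3. *)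
Definition flip12 (p : Oct) :=
  mk8 (cf p 7) (- cf p 5) (cf p 4) (- cf p 6) (- cf p 2) (cf p 1) (- cf p 3) (cf p 0).
Definition flip12V (p : Oct) :=
  mk8 (cf p 7) (cf p 5) (- cf p 4) (- cf p 6) (cf p 2) (- cf p 1) (- cf p 3) (cf p 0).

Lemma isG2t_flip12 : isG2t flip12.
Proof. isG2t_by_coords flip12 flip12V. Qed.

(* [elemij s] acts on u by the elementary matrix 1 + s E_ij and on v by its
   inverse transpose. *)
Definition elem21 s (p : Oct) :=
  mk8 (cf p 0) (cf p 1) (cf p 2 + s * cf p 1) (cf p 3)
      (cf p 4 - s * cf p 5) (cf p 5) (cf p 6) (cf p 7).
Definition elem31 s (p : Oct) :=
  mk8 (cf p 0) (cf p 1) (cf p 2) (cf p 3 + s * cf p 1)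
      (cf p 4 - s * cf p 6) (cf p 5) (cf p 6) (cf p 7).
Definition elem23 s (p : Oct) :=
  mk8 (cf p 0) (cf p 1) (cf p 2 + s * cf p 3) (cf p 3)
      (cf p 4) (cf p 5) (cf p 6 - s * cf p 5) (cf p 7).

Lemma isG2t_elem21 s : isG2t (elem21 s).
Proof. isG2t_by_coords (elem21 s) (elem21 (- s)). Qed.

Lemma isG2t_elem31 s : isG2t (elem31 s).
Proof. isG2t_by_coords (elem31 s) (elem31 (- s)). Qed.

Lemma isG2t_elem23 s : isG2t (elem23 s).
Proof. isG2t_by_coords (elem23 s) (elem23 (- s)). Qed.

(* Short root subgroups: [rootw t] feeds t (alpha - beta) into the
   w-coordinate. *)
Definition rootv1 t (p : Oct) :=
  mk8 (cf p 0 - t * cf p 1) (cf p 1) (cf p 2 - t * cf p 6) (cf p 3 + t * cf p 5)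
      (cf p 4 + t * (cf p 0 - cf p 7) - t ^+ 2 * cf p 1) (cf p 5) (cf p 6)
      (cf p 7 + t * cf p 1).
Definition rootu2 t (p : Oct) :=
  mk8 (cf p 0 - t * cf p 5) (cf p 1)
      (cf p 2 + t * (cf p 0 - cf p 7) - t ^+ 2 * cf p 5) (cf p 3)
      (cf p 4 + t * cf p 3) (cf p 5) (cf p 6 - t * cf p 1) (cf p 7 + t * cf p 5).
Definition rootu3 t (p : Oct) :=
  mk8 (cf p 0 - t * cf p 6) (cf p 1) (cf p 2)
      (cf p 3 + t * (cf p 0 - cf p 7) - t ^+ 2 * cf p 6)
      (cf p 4 - t * cf p 2) (cf p 5 + t * cf p 1) (cf p 6) (cf p 7 + t * cf p 6).

Lemma isG2t_rootv1 t : isG2t (rootv1 t).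
Proof. isG2t_by_coords (rootv1 t) (rootv1 (- t)). Qed.

Lemma isG2t_rootu2 t : isG2t (rootu2 t).
Proof. isG2t_by_coords (rootu2 t) (rootu2 (- t)). Qed.

Lemma isG2t_rootu3 t : isG2t (rootu3 t).
Proof. isG2t_by_coords (rootu3 t) (rootu3 (- t)). Qed.

End Automorphisms.

Section TracelessSubalgebras.
Variable F : fieldType.
Local Notation Oct := (Oct F).

(* Subspaces are represented by predicates, so that their images under
   automorphisms are again subspaces without further machinery; [tsalg_wide]
   says that the dimension is at least 3. *)
Record traceless_subalg3 (B : Oct -> Prop) : Prop := TracelessSubalg3 {
  tsalg_lin : forall c x y, B x -> B y -> B (c *: x + y);
  tsalg_mul : forall x y, B x -> B y -> B (omul x y);
  tsalg_tr : forall x, B x -> otr x = 0;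
  tsalg_wide : forall p1 p2, exists2 q, B q & forall a b, q <> a *: p1 + b *: p2 }.

Lemma vspace_tsalg (A : {vspace Oct}) :
  is_subalgebra A -> (forall a, a \in A -> otr a = 0) -> (3 <= \dim A)%N ->
  traceless_subalg3 (fun x => x \in A).
Proof.
move=> mulA trA dimA; split=> // [c x y Ax Ay|p1 p2]; first by rewrite memvD ?memvZ.
set S := <<[:: p1; p2]>>%VS.
have /allPn [x Ax xS] : ~~ all (fun x => x \in S) (vbasis A).
  apply: contraTN dimA => /allP basisS; rewrite -ltnNge ltnS.
  apply: leq_trans (dim_span [:: p1; p2]); apply: dimvS.
  by rewrite -(span_basis (vbasisP A)); apply/span_subvP => y /basisS.
exists x; first exact: vbasis_mem.
move=> a b x_def; move/negP: xS; apply; rewrite x_def.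
by rewrite memvD ?memvZ ?memv_span ?inE ?eqxx ?orbT.
Qed.

Section Closure.
Variable B : Oct -> Prop.
Hypothesis tsB : traceless_subalg3 B.

Lemma tsalg0 : B 0.
Proof.
have [q Bq _] := tsalg_wide tsB 0 0.
by have := tsalg_lin tsB (-1) Bq Bq; rewrite scaleN1r addNr.
Qed.

Lemma tsalgZ c x : B x -> B (c *: x).
Proof. by move=> Bx; have := tsalg_lin tsB c Bx tsalg0; rewrite addr0. Qed.

Lemma tsalg_one q : B q -> onorm q != 0 -> B (oone F).
Proof.
move=> Bq nq; have q2 : omul q q = (- onorm q) *: oone F.
  by rewrite omul_sq (tsalg_tr tsB Bq) scale0r sub0r scaleNr.
have -> : oone F = (- onorm q)^-1 *: omul q q.
  by rewrite q2 scalerA mulVf ?scale1r ?oppr_eq0.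
by apply: tsalgZ; apply: (tsalg_mul tsB).
Qed.

End Closure.

Definition img (g : Oct -> Oct) (B : Oct -> Prop) (x : Oct) : Prop :=
  exists2 y, B y & x = g y.

Lemma img_comp (g h : Oct -> Oct) B x : img (g \o h) B x <-> img g (img h B) x.
Proof.
split; first by case=> y By ->; exists (h y) => //; exists y.
by case=> _ [y By ->] ->; exists y.
Qed.

Lemma img_oone (g : Oct -> Oct) B : isG2t g -> img g B (oone F) <-> B (oone F).
Proof.
case=> [[_ [h gK _] _] _ g1]; split=> [[y By y_def]|B1]; last by exists (oone F).
by rewrite (can_inj gK (etrans g1 y_def)).
Qed.

Lemma img_scale (g : Oct -> Oct) B p q l :
  isG2t g -> traceless_subalg3 B -> B p -> g p = l *: q -> l != 0 -> img g B q.
Proof.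
move=> G2g tsB Bp gp l0; exists (l^-1 *: p); first exact: tsalgZ.
by rewrite isG2tZ // gp scalerA mulVf // scale1r.
Qed.

Lemma tsalg_img (g : Oct -> Oct) B :
  isG2t g -> traceless_subalg3 B -> traceless_subalg3 (img g B).
Proof.
move=> G2g tsB; have [[_ [h gK hK] gM] g_tr _] := G2g; split.
- move=> c _ _ [x Bx ->] [y By ->]; exists (c *: x + y); last by rewrite isG2t_lin.
  exact: (tsalg_lin tsB).
- by move=> _ _ [x Bx ->] [y By ->]; exists (omul x y); [apply: (tsalg_mul tsB)|rewrite gM].
- by move=> _ [x Bx ->]; rewrite g_tr (tsalg_tr tsB).
- move=> p1 p2; have [q Bq q_span] := tsalg_wide tsB (h p1) (h p2).
  exists (g q); first by exists q.
  move=> a b gq; apply: (q_span a b); apply: (can_inj gK).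
  by rewrite gq (isG2t_lin _ _ _ G2g) (isG2tZ _ _ G2g) !hK.
Qed.

End TracelessSubalgebras.

Ltac coords_field :=
  apply: mk8_eq; field; repeat (apply/andP; split); rewrite ?mulf_neq0 ?oppr_eq0 //.

Section NullLines.
Variable F : fieldType.
Local Notation Oct := (Oct F).

Definition G2_line_conj (p q : Oct) : Prop :=
  exists2 g, isG2t g & exists2 l : F, l != 0 & g p = l *: q.

Lemma G2_line_conj_comp (g : Oct -> Oct) p q :
  isG2t g -> G2_line_conj (g p) q -> G2_line_conj p q.
Proof.
by move=> G2g [h G2h [l l0 hgp]]; exists (h \o g); [apply: isG2t_comp | exists l].
Qed.

Lemma onull_isG2t (g : Oct -> Oct) p : isG2t g -> onull p -> onull (g p).
Proof.
move=> G2g [p2 trp]; have [[_ _ gM] g_tr _] := G2g.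
by split; [rewrite -gM p2 isG2t0 | rewrite g_tr].
Qed.

Lemma G2_line_conj_u1_v (x1 y2 y3 : F) : x1 != 0 ->
  G2_line_conj (mk8 0 x1 0 0 0 y2 y3 0) (ouvec F 0).
Proof.
move=> x1_nz; have [->|y2_nz] := eqVneq y2 0.
  exists (rootu2 (y3 / x1)); first exact: isG2t_rootu2.
  by exists x1 => //; rewrite /rootu2 !cf_mk8 //= ouvec0E mk8Z; coords_field.
exists (rootu3 (- y2 / x1) \o elem23 (y3 / y2)).
  exact: isG2t_comp (isG2t_rootu3 _) (isG2t_elem23 _).
by exists x1 => //; rewrite /= /rootu3 /elem23 !cf_mk8 //= ouvec0E mk8Z; coords_field.
Qed.

Lemma onull_cf1_conj_u1 (p : Oct) : onull p -> cf p 1 != 0 -> G2_line_conj p (ouvec F 0).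
Proof.
move=> /onullP[/otr0_cf7 p7 np] x1_nz; pose t := cf p 0 / cf p 1.
pose g := elem31 (- (cf p 3 + t * cf p 5) / cf p 1)
  \o elem21 (- (cf p 2 - t * cf p 6) / cf p 1) \o rootv1 t.
have G2g : isG2t g.
  exact: isG2t_comp (isG2t_comp (isG2t_elem31 _) (isG2t_elem21 _)) (isG2t_rootv1 _).
apply: (G2_line_conj_comp G2g).
suff -> : g p = mk8 0 (cf p 1) 0 0 0 (cf p 5) (cf p 6) 0 by exact: G2_line_conj_u1_v.
rewrite /g /= /elem31 /elem21 /rootv1 !cf_mk8 //= p7 /t; apply: mk8_eq; try by field.
(* the v1-coordinate is - n(p) / x1 *)
have -> : (0 : F) = - onorm p / cf p 1 by rewrite np oppr0 mul0r.
by rewrite /onorm p7; field.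
Qed.

Lemma onull_u_conj_u1 (p : Oct) : onull p ->
  [\/ cf p 1 != 0, cf p 2 != 0 | cf p 3 != 0] -> G2_line_conj p (ouvec F 0).
Proof.
move=> null_p [x1_nz|x2_nz|x3_nz]; first exact: onull_cf1_conj_u1.
- apply: (G2_line_conj_comp (@isG2t_rot12 F)); apply: onull_cf1_conj_u1.
    exact: onull_isG2t (@isG2t_rot12 F) null_p.
  by rewrite /rot12 cf_mk8.
- apply: (G2_line_conj_comp (@isG2t_rot13 F)); apply: onull_cf1_conj_u1.
    exact: onull_isG2t (@isG2t_rot13 F) null_p.
  by rewrite /rot13 cf_mk8.
Qed.

Lemma onull_conj_u1 (p : Oct) : p != 0 -> onull p -> G2_line_conj p (ouvec F 0).
Proof.
move=> p_nz null_p.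
have [x1|x1] := eqVneq (cf p 1) 0; last by apply: (onull_u_conj_u1 null_p); constructor 1.
have [x2|x2] := eqVneq (cf p 2) 0; last by apply: (onull_u_conj_u1 null_p); constructor 2.
have [x3|x3] := eqVneq (cf p 3) 0; last by apply: (onull_u_conj_u1 null_p); constructor 3.
have /onullP[/otr0_cf7 p7 np] := null_p.
have : cf p 0 * cf p 0 = - onorm p by rewrite /onorm p7 x1 x2 x3; ring.
rewrite np oppr0 => /eqP; rewrite mulf_eq0 orbb => /eqP p0.
apply: (G2_line_conj_comp (@isG2t_swapuv F)); apply: onull_u_conj_u1.
  exact: onull_isG2t (@isG2t_swapuv F) null_p.
rewrite /swapuv !cf_mk8 //= !oppr_eq0.
have [y1|] := eqVneq (cf p 4) 0; last by constructor 1.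
have [y2|] := eqVneq (cf p 5) 0; last by constructor 2.
have [y3|] := eqVneq (cf p 6) 0; last by constructor 3.
case/eqP: p_nz; rewrite [p]mk8_cf p7 p0 x1 x2 x3 y1 y2 y3 oppr0.
by rewrite [RHS]mk8_cf !cf0.
Qed.

End NullLines.

Ltac oct_coords :=
  rewrite ?ooneE ?ouvec0E ?ovvec1E ?ovvec2E [LHS]mk8_cf [RHS]mk8_cf; apply: mk8_eq;
  rewrite ?omulE ?cfD ?cfZ ?cf_mk8 //=.

Section Normalisation.
Variable F : fieldType.
Local Notation Oct := (Oct F).
Local Notation u1 := (ouvec F 0).
Local Notation v2 := (ovvec F 1).
Local Notation v3 := (ovvec F 2).
Variable B : Oct -> Prop.
Hypothesis tsB : traceless_subalg3 B.

Lemma tsalg_u1_v23_conj_v2 a b : B u1 -> B (mk8 0 0 0 0 0 a b 0) -> a != 0 \/ b != 0 ->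
  exists2 g, isG2t g & img g B u1 /\ img g B v2.
Proof.
move=> Bu1 Bw ab; have [a0|a_nz] := eqVneq a 0.
- have b_nz : b != 0 by case: ab; rewrite // a0 eqxx.
  exists (@rot23 F); first exact: isG2t_rot23.
  split; first by exists u1 => //; rewrite /rot23 ouvec0E !cf_mk8 //=; apply: mk8_eq; ring.
  apply: (img_scale (@isG2t_rot23 F) tsB Bw _ b_nz).
  by rewrite /rot23 ovvec1E mk8Z !cf_mk8 //= a0; apply: mk8_eq; ring.
- exists (elem23 (b / a)); first exact: isG2t_elem23.
  split; first by exists u1 => //; rewrite /elem23 ouvec0E !cf_mk8 //=; apply: mk8_eq; ring.
  apply: (img_scale (isG2t_elem23 _) tsB Bw _ a_nz).
  by rewrite /elem23 ovvec1E mk8Z !cf_mk8 //=; coords_field.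
Qed.

Lemma tsalg_u1_v2_null_conj_v3 a x y : B u1 -> B v2 -> B (mk8 a 0 0 x 0 0 y (- a)) ->
  a * a + x * y = 0 -> x != 0 \/ y != 0 ->
  exists2 g, isG2t g & [/\ img g B u1, img g B v2 & img g B v3].
Proof.
move=> Bu1 Bv2 Br r_null xy; have [y0|y_nz] := eqVneq y 0.
- move: r_null; rewrite y0 mulr0 addr0 => /eqP; rewrite mulf_eq0 orbb => /eqP a0.
  have x_nz : x != 0 by case: xy; rewrite // y0 eqxx.
  exists (@flip12 F); first exact: isG2t_flip12.
  split.
  + exists ((-1) *: v2); first exact: (tsalgZ tsB).
    by rewrite /flip12 ouvec0E ovvec1E mk8Z !cf_mk8 //=; apply: mk8_eq; ring.
  + exists u1 => //.
    by rewrite /flip12 ouvec0E ovvec1E !cf_mk8 //=; apply: mk8_eq; ring.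
  + apply: (img_scale (@isG2t_flip12 F) tsB Br (l := - x)); last by rewrite oppr_eq0.
    by rewrite /flip12 ovvec2E mk8Z !cf_mk8 //= a0 y0; apply: mk8_eq; ring.
- pose t := a / y; exists (rootu3 t); first exact: isG2t_rootu3.
  split.
  + exists ((- t) *: v2 + u1); first exact: (tsalg_lin tsB).
    by rewrite /rootu3 ouvec0E ovvec1E mk8_lin !cf_mk8 //=; apply: mk8_eq; ring.
  + exists v2 => //.
    by rewrite /rootu3 ovvec1E !cf_mk8 //=; apply: mk8_eq; ring.
  + apply: (img_scale (isG2t_rootu3 _) tsB Br (l := y)) => //.
    rewrite /rootu3 ovvec2E mk8Z !cf_mk8 //= /t; apply: mk8_eq; try by field.
    (* the u3-coordinate is (a^2 + x y) / y, to be compared with y * 0 *)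
    have -> : (0 : F) = (a * a + x * y) / (y * y) by rewrite r_null mul0r.
    by field.
Qed.

Lemma tsalg_u1_v2_conj_v3 : B u1 -> B v2 -> ~ B (oone F) ->
  exists2 g, isG2t g & [/\ img g B u1, img g B v2 & img g B v3].
Proof.
move=> Bu1 Bv2 B1n; have [q Bq q_span] := tsalg_wide tsB u1 v2.
have q7 := otr0_cf7 (tsalg_tr tsB Bq).
have y1 : cf q 4 = 0 by rewrite -otr_mul_u1 (tsalg_tr tsB) //; apply: (tsalg_mul tsB).
have x2 : cf q 2 = 0 by rewrite -otr_mul_v2 (tsalg_tr tsB) //; apply: (tsalg_mul tsB).
pose r := mk8 (cf q 0) 0 0 (cf q 3) 0 0 (cf q 6) (- cf q 0).
have Br : B r.
  have -> : r = (- cf q 1) *: u1 + ((- cf q 5) *: v2 + q).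
    by rewrite /r; oct_coords; rewrite ?x2 ?y1 ?q7; ring.
  by apply: (tsalg_lin tsB) => //; apply: (tsalg_lin tsB).
have r_null : cf q 0 * cf q 0 + cf q 3 * cf q 6 = 0.
  have -> : cf q 0 * cf q 0 + cf q 3 * cf q 6 = - onorm r.
    by rewrite /onorm /r !cf_mk8 //=; ring.
  apply/eqP; rewrite oppr_eq0; apply: contraT => nr_nz.
  by case: B1n; apply: (tsalg_one tsB Br nr_nz).
apply: (tsalg_u1_v2_null_conj_v3 Bu1 Bv2 Br r_null).
have [y3|] := eqVneq (cf q 6) 0; last by right.
left; apply/eqP => x3; apply: (q_span (cf q 1) (cf q 5)).
move: r_null; rewrite y3 mulr0 addr0 => /eqP; rewrite mulf_eq0 orbb => /eqP q0.
by oct_coords; rewrite ?x2 ?y1 ?q7 ?x3 ?y3 ?q0; ring.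
Qed.

Hypothesis F2 : 2%N \in [pchar F].

Lemma tsalg_u1_conj_v2 : B u1 -> exists2 g, isG2t g & img g B u1 /\ img g B v2.
Proof.
move=> Bu1; have [q Bq q_span] := tsalg_wide tsB (oone F) u1.
have q7 : cf q 7 = cf q 0 by rewrite (otr0_cf7 (tsalg_tr tsB Bq)) (oppr_pchar2 F2).
have y1 : cf q 4 = 0 by rewrite -otr_mul_u1 (tsalg_tr tsB) //; apply: (tsalg_mul tsB).
suff [a [b [Bw ab]]] : exists a b, B (mk8 0 0 0 0 0 a b 0) /\ (a != 0 \/ b != 0).
  exact: (tsalg_u1_v23_conj_v2 Bu1 Bw ab).
have [x23|] := boolP ((cf q 2 != 0) || (cf q 3 != 0)).
  exists (- cf q 3), (cf q 2); split; last by case/orP: x23; [right|left; rewrite oppr_eq0].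
  have -> : mk8 0 0 0 0 0 (- cf q 3) (cf q 2) 0 = cf q 0 *: u1 + omul u1 q.
    by oct_coords; rewrite ?y1 ?q7; ring: (pcharf0 F2).
  by apply: (tsalg_lin tsB) => //; apply: (tsalg_mul tsB).
rewrite negb_or !negbK => /andP[/eqP x2 /eqP x3].
have B1 : B (cf q 0 *: oone F).
  have [->|q0_nz] := eqVneq (cf q 0) 0; first by rewrite scale0r; apply: tsalg0.
  apply: (tsalgZ tsB); apply: (tsalg_one tsB Bq).
  have -> : onorm q = cf q 0 * cf q 0 by rewrite /onorm q7 x2 x3 y1; ring.
  by rewrite mulf_neq0.
exists (cf q 5), (cf q 6); split.
  have -> : mk8 0 0 0 0 0 (cf q 5) (cf q 6) 0 = (- cf q 1) *: u1 + ((-1) *: (cf q 0 *: oone F) + q).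
    by oct_coords; rewrite ?x2 ?x3 ?y1 ?q7; ring.
  by apply: (tsalg_lin tsB) => //; apply: (tsalg_lin tsB).
have [y2|] := eqVneq (cf q 5) 0; last by left.
have [y3|] := eqVneq (cf q 6) 0; last by right.
case: (q_span (cf q 0) (cf q 1)).
by oct_coords; rewrite ?x2 ?x3 ?y1 ?y2 ?y3 ?q7; ring.
Qed.

End Normalisation.

Lemma closed_sqrt (F : closedFieldType) (m : F) : exists l : F, l ^+ 2 = m.
Proof.
have [l] := @solve_monicpoly F 2 (nth 0 [:: m]) isT.
by rewrite !big_ord_recl big_ord0 /= mulr1 mul0r !addr0; exists l.
Qed.

Section ClosedChar2.
Variable F : closedFieldType.
Hypothesis F2 : 2%N \in [pchar F].
Local Notation u1 := (ouvec F 0).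
Local Notation v2 := (ovvec F 1).
Local Notation v3 := (ovvec F 2).
Variable B : Oct F -> Prop.
Hypothesis tsB : traceless_subalg3 B.

Lemma tsalg_onull : exists2 p, B p & p != 0 /\ onull p.
Proof.
have [q Bq q_span] := tsalg_wide tsB (oone F) 0.
have q7 := otr0_cf7 (tsalg_tr tsB Bq).
have [l l2] := closed_sqrt (- onorm q).
have Bl1 : B (l *: oone F).
  have [->|l_nz] := eqVneq l 0; first by rewrite scale0r; apply: tsalg0.
  apply: (tsalgZ tsB); apply: (tsalg_one tsB Bq).
  by rewrite -oppr_eq0 -l2 expf_neq0.
exists ((-1) *: (l *: oone F) + q); first exact: (tsalg_lin tsB).
split.
  apply/eqP => p0; apply: (q_span l 0); rewrite scale0r addr0.
  by apply/eqP; rewrite -subr_eq0 -scaleN1r addrC p0.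
apply/onullP; rewrite otrE /onorm !cfD !cfZ ooneE !cf_mk8 //= q7.
split; first by rewrite !(oppr_pchar2 F2); ring: (pcharf0 F2).
by move: l2; rewrite /onorm q7 => l2; ring: l2.
Qed.

Lemma tsalg_conj_u1_v2 : exists2 g, isG2t g & img g B u1 /\ img g B v2.
Proof.
have [p Bp [p_nz null_p]] := tsalg_onull.
have [g1 G2g1 [l l_nz g1p]] := onull_conj_u1 p_nz null_p.
have [g2 G2g2 [u1_in v2_in]] :=
  tsalg_u1_conj_v2 (tsalg_img G2g1 tsB) F2 (img_scale G2g1 tsB Bp g1p l_nz).
by exists (g2 \o g1); [exact: isG2t_comp | split; apply/img_comp].
Qed.

Lemma tsalg_conj_u1_v2_v3 : ~ B (oone F) ->
  exists2 g, isG2t g & [/\ img g B u1, img g B v2, img g B v3 & ~ img g B (oone F)].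
Proof.
move=> B1n; have [g1 G2g1 [u1_in v2_in]] := tsalg_conj_u1_v2.
have [g2 G2g2 [u1_in' v2_in' v3_in']] :=
  tsalg_u1_v2_conj_v3 (tsalg_img G2g1 tsB) u1_in v2_in (fun h => B1n ((img_oone _ G2g1).1 h)).
exists (g2 \o g1); first exact: isG2t_comp.
split; [exact/img_comp..|].
by move=> /img_comp /(img_oone _ G2g2) /(img_oone _ G2g1).
Qed.

End ClosedChar2.

Theorem lemma6p9 (F : closedFieldType) (hchar : 2%N \in [pchar F])
  (A : {vspace Oct F})
  (hsub : is_subalgebra A)
  (htr : forall a, a \in A -> otr a = 0)
  (hdim : (3 <= \dim A)%N) :
  exists g : Oct F -> Oct F, isG2 g /\
    ((in_image g A (oone F) /\ in_image g A (ouvec F 0)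
        /\ in_image g A (ovvec F 1))
     \/
     (in_image g A (ouvec F 0) /\ in_image g A (ovvec F 1)
        /\ in_image g A (ovvec F 2) /\ ~ in_image g A (oone F))).
Proof.
have tsA := vspace_tsalg hsub htr hdim.
have [A1|/negP A1] := boolP (oone F \in A).
  have [g G2g [u1_in v2_in]] := tsalg_conj_u1_v2 hchar tsA.
  exists g; split; first by case: G2g.
  by left; split; first exact/(img_oone _ G2g).
have [g G2g [u1_in v2_in v3_in not1]] := tsalg_conj_u1_v2_v3 hchar tsA A1.
by exists g; split; [case: G2g | right].
Qed.
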